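(* Let $r=\frac{e^2-1}{e^2+1}$ and let $\mathbb{D}_K(1)=\{x\in\mathbb{R}^2:|x|<r\}$ be the Klein unit disc. For $x\in\mathbb{D}_K(1)$ and $\xi\in T_x\mathbb{D}_K(1)\cong\mathbb{R}^2$, $\xi\neq0$, define $$\mathcal{F}(x,\xi)=\coth\big(d_K(x,\mathfrak{a})\big)\,\alpha_K(x,\xi),$$ where $\mathfrak{a}=\mathfrak{a}(x,\xi)$ is the unique point $x+s\xi$ with $s>0$ and $|x+s\xi|=r$, and set $\mathcal{F}(x,0)=0$. Then $\mathcal{F}=\alpha_F+\beta_F$ with $$\alpha_F(x,\xi)=\frac{\sqrt{(r^2-|x|^2)|\xi|^2+\langle x,\xi\rangle^2}}{r^2-|x|^2},\qquad \beta_F(x,\xi)=\frac{(1-r^2)\langle x,\xi\rangle}{(r^2-|x|^2)(1-|x|^2)}.$$ Moreover $\alpha_F$ is a Riemannian metric on $\mathbb{D}_K(1)$, $\beta_F=df$ is exact (hence closed) with $f(x)=\tfrac12\log\frac{1-|x|^2}{r^2-|x|^2}$, and $$\|\beta_F\|_{\alpha_F}^2=\frac{|x|^2(1-r^2)^2}{r^2(1-|x|^2)^2}<1\quad\text{on }\mathbb{D}_K(1),$$ so that $\mathcal{F}$ is a Randers metric on $\mathbb{D}_K(1)$ with closed $1$-form.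
   Context: $|\cdot|$ and $\langle\cdot,\cdot\rangle$ are the Euclidean norm and inner product on $\mathbb{R}^2$. The Klein distance on $\mathbb{D}_E(1)=\{|x|<1\}$ is $d_K(x,y)=\tfrac12\log\frac{|x-a||y-b|}{|y-a||x-b|}$ for $x\ne y$, where $a$ (resp. $b$) is the intersection of the Euclidean ray from $x$ through $y$ (resp. from $y$ through $x$) with the unit circle; $d_K(x,x)=0$. The Klein (Riemannian) metric on $\mathbb{D}_E(1)$ is $\alpha_K(x,\xi)=\frac{\sqrt{(1-|x|^2)|\xi|^2+\langle x,\xi\rangle^2}}{1-|x|^2}$. A Randers metric is $F=\alpha+\beta$ with $\alpha=\sqrt{a_{ij}(x)\xi^i\xi^j}$ Riemannian and $\beta=b_i(x)\xi^i$ a $1$-form with $\|\beta\|_\alpha^2=a^{ij}b_ib_j<1$. *)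

From Stdlib Require Import Reals.
From Coquelicot Require Import Coquelicot.
Open Scope R_scope.

Definition R2 : Type := (R * R)%type.

Definition dot (u v : R2) : R := fst u * fst v + snd u * snd v.
Definition nrm2 (u : R2) : R := dot u u.
Definition nrm (u : R2) : R := sqrt (nrm2 u).
Definition vadd (u v : R2) : R2 := (fst u + fst v, snd u + snd v).
Definition vsub (u v : R2) : R2 := (fst u - fst v, snd u - snd v).
Definition vscal (s : R) (u : R2) : R2 := (s * fst u, s * snd u).

(** The point p + t v (t > 0) on the circle of radius c, for |p| < c and
    v <> 0: t is the unique positive root of |p + t v|^2 = c^2. *)
Definition ray_exit (c : R) (p v : R2) : R2 :=
  let t := (- dot p v + sqrt (dot p v ^ 2 + nrm2 v * (c ^ 2 - nrm2 p))) / nrm2 v in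
  vadd p (vscal t v).

Definition dK (x y : R2) : R :=
  match Req_EM_T (fst x) (fst y), Req_EM_T (snd x) (snd y) with
  | left _, left _ => 0
  | _, _ =>
    let a := ray_exit 1 x (vsub y x) in
    let b := ray_exit 1 y (vsub x y) in
    / 2 * ln ((nrm (vsub x a) * nrm (vsub y b)) / (nrm (vsub y a) * nrm (vsub x b)))
  end.

Definition alphaK (x xi : R2) : R :=
  sqrt ((1 - nrm2 x) * nrm2 xi + dot x xi ^ 2) / (1 - nrm2 x).

Definition coth (z : R) : R := cosh z / sinh z.

Definition rK : R := (exp 2 - 1) / (exp 2 + 1).
Definition DK1 (x : R2) : Prop := nrm x < rK.

Definition frak_a (x xi : R2) : R2 := ray_exit rK x xi.

Definition FF (x xi : R2) : R :=
  match Req_EM_T (fst xi) 0, Req_EM_T (snd xi) 0 with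
  | left _, left _ => 0
  | _, _ => coth (dK x (frak_a x xi)) * alphaK x xi
  end.

Definition alphaF (x xi : R2) : R :=
  sqrt ((rK ^ 2 - nrm2 x) * nrm2 xi + dot x xi ^ 2) / (rK ^ 2 - nrm2 x).

Definition betaF (x xi : R2) : R :=
  (1 - rK ^ 2) * dot x xi / ((rK ^ 2 - nrm2 x) * (1 - nrm2 x)).

Definition fF (x : R2) : R := / 2 * ln ((1 - nrm2 x) / (rK ^ 2 - nrm2 x)).

Fixpoint Ck (n : nat) (U : R2 -> Prop) (f : R2 -> R) : Prop :=
  match n with
  | O => forall x, U x -> continuous f x
  | S m => exists d1 d2 : R2 -> R,
      (forall x, U x ->
         is_derive (fun t => f (t, snd x)) (fst x) (d1 x) /\
         is_derive (fun t => f (fst x, t)) (snd x) (d2 x)) /\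
      Ck m U d1 /\ Ck m U d2
  end.

Definition smooth (U : R2 -> Prop) (f : R2 -> R) : Prop := forall n, Ck n U f.

Definition qform (g11 g12 g22 : R) (xi : R2) : R :=
  g11 * fst xi ^ 2 + 2 * g12 * fst xi * snd xi + g22 * snd xi ^ 2.

Definition riemann_coeffs (U : R2 -> Prop) (alpha : R2 -> R2 -> R)
  (g11 g12 g22 : R2 -> R) : Prop :=
  (forall x xi, U x -> alpha x xi = sqrt (qform (g11 x) (g12 x) (g22 x) xi)) /\
  (forall x xi, U x -> xi <> (0, 0) -> 0 < qform (g11 x) (g12 x) (g22 x) xi) /\
  smooth U g11 /\ smooth U g12 /\ smooth U g22.

Definition is_Riemannian_metric (U : R2 -> Prop) (alpha : R2 -> R2 -> R) : Prop :=
  exists g11 g12 g22, riemann_coeffs U alpha g11 g12 g22.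

Definition oneform_coeffs (U : R2 -> Prop) (beta : R2 -> R2 -> R)
  (b1 b2 : R2 -> R) : Prop :=
  (forall x xi, U x -> beta x xi = b1 x * fst xi + b2 x * snd xi) /\
  smooth U b1 /\ smooth U b2.

Definition is_differential_of (U : R2 -> Prop) (beta : R2 -> R2 -> R)
  (f : R2 -> R) : Prop :=
  exists b1 b2, oneform_coeffs U beta b1 b2 /\
    forall x, U x ->
      is_derive (fun t => f (t, snd x)) (fst x) (b1 x) /\
      is_derive (fun t => f (fst x, t)) (snd x) (b2 x).

Definition is_closed_form (U : R2 -> Prop) (beta : R2 -> R2 -> R) : Prop :=
  exists b1 b2, oneform_coeffs U beta b1 b2 /\
    forall x, U x -> exists c,
      is_derive (fun t => b2 (t, snd x)) (fst x) c /\
      is_derive (fun t => b1 (fst x, t)) (snd x) c.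

(** ||beta||_alpha^2 = a^{ij} b_i b_j, (a^{ij}) the inverse of (a_ij). *)
Definition dual_norm_sq (g11 g12 g22 b1 b2 : R) : R :=
  (g22 * b1 ^ 2 - 2 * g12 * b1 * b2 + g11 * b2 ^ 2) / (g11 * g22 - g12 ^ 2).

Definition is_Randers (U : R2 -> Prop) (F : R2 -> R2 -> R) : Prop :=
  exists (alpha beta : R2 -> R2 -> R) g11 g12 g22 b1 b2,
    riemann_coeffs U alpha g11 g12 g22 /\
    oneform_coeffs U beta b1 b2 /\
    (forall x xi, U x -> F x xi = alpha x xi + beta x xi) /\
    (forall x, U x -> dual_norm_sq (g11 x) (g12 x) (g22 x) (b1 x) (b2 x) < 1).

(* On the line x + t xi the unit circle and the circle of radius r cut out
   parameters given by the two discriminants S1^2 = <x,xi>^2 + |xi|^2 (1 - |x|^2)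
   and Sr^2 = <x,xi>^2 + |xi|^2 (r^2 - |x|^2); the Klein distance from x to
   a(x, xi) is half the log of a cross-ratio of these parameters, and coth of it
   simplifies to (S1^2 - <x,xi> Sr) / (S1 (Sr - <x,xi>)), which after
   multiplication by alpha_K = S1 / (1 - |x|^2) is alpha_F + beta_F.  The
   remaining claims concern explicit rational functions of x whose only
   denominators are powers of r^2 - |x|^2 and 1 - |x|^2; these are closed
   under partial differentiation, hence smooth on D_K(1). *)

From Stdlib Require Import Reals Lra Psatz.
From Coquelicot Require Import Coquelicot.
Open Scope R_scope.

Lemma rK_bounds : 0 < rK < 1.
Proof.
  unfold rK. assert (He : 1 < exp 2) by (rewrite <- exp_0; apply exp_increasing; lra).
  split.
  - apply Rdiv_lt_0_compat; lra.
  - apply (Rdiv_lt_1 (exp 2 - 1)); lra.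
Qed.

Lemma DK1_nrm2 x : DK1 x -> nrm2 x < rK ^ 2.
Proof.
  unfold DK1, nrm. intros H. apply sqrt_lt_0_alt.
  rewrite sqrt_pow2 by (pose proof rK_bounds; lra). exact H.
Qed.

Lemma nrm2_nonneg u : 0 <= nrm2 u.
Proof. destruct u as [a b]. unfold nrm2, dot; cbn. nra. Qed.

Lemma nrm2_pos u : u <> (0, 0) -> 0 < nrm2 u.
Proof.
  destruct u as [a b]. unfold nrm2, dot; cbn. intros Hu.
  destruct (Req_dec a 0), (Req_dec b 0); subst; [congruence | nra ..].
Qed.

Lemma sqrt_sqr_mult l D : sqrt (l ^ 2 * D) = Rabs l * sqrt D.
Proof.
  rewrite sqrt_mult_alt, <- sqrt_Rsqr_abs by apply pow2_ge_0.
  unfold Rsqr. do 2 f_equal. ring.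
Qed.

(* The line [t |-> x + t xi] meets the circle of radius [c] at the parameters
   [chord_entry c x xi <= chord_exit c x xi]. *)
Definition chord_disc (c : R) (x xi : R2) : R := dot x xi ^ 2 + nrm2 xi * (c ^ 2 - nrm2 x).
Definition chord_exit (c : R) (x xi : R2) : R := (- dot x xi + sqrt (chord_disc c x xi)) / nrm2 xi.
Definition chord_entry (c : R) (x xi : R2) : R := (- dot x xi - sqrt (chord_disc c x xi)) / nrm2 xi.

Lemma ray_exit_chord c p v : ray_exit c p v = vadd p (vscal (chord_exit c p v) v).
Proof. reflexivity. Qed.

Lemma chord_disc_line c x xi u l :
  chord_disc c (vadd x (vscal u xi)) (vscal l xi) = l ^ 2 * chord_disc c x xi.
Proof. destruct x, xi. unfold chord_disc, nrm2, dot, vadd, vscal; cbn. ring. Qed.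

Lemma ray_exit_line c x xi u l : 0 < nrm2 xi -> l <> 0 ->
  ray_exit c (vadd x (vscal u xi)) (vscal l xi)
  = vadd x (vscal ((- dot x xi + Rabs l / l * sqrt (chord_disc c x xi)) / nrm2 xi) xi).
Proof.
  intros HN Hl. rewrite ray_exit_chord. unfold chord_exit.
  rewrite chord_disc_line, sqrt_sqr_mult.
  set (S := sqrt (chord_disc c x xi)). clearbody S.
  destruct x as [x1 x2], xi as [u1 u2]. unfold nrm2, dot, vadd, vscal in *; cbn in *.
  assert (Hl2 : 0 < l * l) by (apply Rsqr_pos_lt; exact Hl).
  f_equal; field; repeat split; nra.
Qed.

Lemma ray_exit_line_forward c x xi u l : 0 < nrm2 xi -> 0 < l ->
  ray_exit c (vadd x (vscal u xi)) (vscal l xi) = vadd x (vscal (chord_exit c x xi) xi).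
Proof.
  intros HN Hl. rewrite ray_exit_line by lra.
  rewrite Rabs_pos_eq by lra. unfold chord_exit. do 2 f_equal. field. lra.
Qed.

Lemma ray_exit_line_backward c x xi u l : 0 < nrm2 xi -> l < 0 ->
  ray_exit c (vadd x (vscal u xi)) (vscal l xi) = vadd x (vscal (chord_entry c x xi) xi).
Proof.
  intros HN Hl. rewrite ray_exit_line by lra.
  rewrite Rabs_left by lra. unfold chord_entry. do 2 f_equal. field. lra.
Qed.

Lemma vsub_line x xi a b : vsub (vadd x (vscal a xi)) (vadd x (vscal b xi)) = vscal (a - b) xi.
Proof. destruct x, xi. unfold vsub, vadd, vscal; cbn. f_equal; ring. Qed.

Lemma nrm_vscal l v : nrm (vscal l v) = Rabs l * sqrt (nrm2 v).
Proof.
  unfold nrm. rewrite <- sqrt_sqr_mult. f_equal.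
  destruct v. unfold nrm2, dot, vscal; cbn. ring.
Qed.

Lemma dK_line x xi a b : 0 < nrm2 xi ->
  chord_entry 1 x xi < a -> a < b -> b < chord_exit 1 x xi ->
  dK (vadd x (vscal a xi)) (vadd x (vscal b xi))
  = / 2 * ln ((chord_exit 1 x xi - a) * (b - chord_entry 1 x xi)
              / ((chord_exit 1 x xi - b) * (a - chord_entry 1 x xi))).
Proof.
  intros HN Hea Hab Hbe.
  assert (Hne : ~ (fst (vadd x (vscal a xi)) = fst (vadd x (vscal b xi))
                   /\ snd (vadd x (vscal a xi)) = snd (vadd x (vscal b xi)))).
  { destruct x, xi as [u1 u2]. unfold nrm2, dot, vadd, vscal in *; cbn in *.
    intros [H1 H2]. assert (E1 : (a - b) * u1 = 0) by lra. assert (E2 : (a - b) * u2 = 0) by lra.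
    apply Rmult_integral in E1, E2. destruct E1, E2; nra. }
  unfold dK. rewrite !vsub_line, ray_exit_line_forward, ray_exit_line_backward by lra.
  rewrite !vsub_line, !nrm_vscal.
  rewrite (Rabs_left (a - _)), (Rabs_pos_eq (b - _)), (Rabs_left (b - _)), (Rabs_pos_eq (a - _)) by lra.
  assert (HSN : 0 < sqrt (nrm2 xi)) by (apply sqrt_lt_R0; lra).
  repeat destruct Req_dec_T; try tauto; do 2 f_equal; field; repeat split; lra.
Qed.

Lemma coth_half_ln Q : 1 < Q -> coth (/ 2 * ln Q) = (Q + 1) / (Q - 1).
Proof.
  intros HQ. unfold coth, cosh, sinh. rewrite exp_Ropp.
  set (w := exp (/ 2 * ln Q)).
  assert (Hw : 0 < w) by apply exp_pos.
  assert (Hw2 : w * w = Q).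
  { unfold w. rewrite <- exp_plus, <- Rmult_plus_distr_r.
    replace (/ 2 + / 2) with 1 by field. rewrite Rmult_1_l. apply exp_ln. lra. }
  rewrite <- Hw2. field. nra.
Qed.

(* [Q] is the cross-ratio of the parameters [0 < s] of [x] and [a(x, xi)]
   against the chord endpoints [e < E] of the unit circle. *)
Lemma chord_cross_ratio p N S1 Sr : 0 < N -> p < Sr -> - p < Sr -> Sr < S1 ->
  let e := (- p - S1) / N in let E := (- p + S1) / N in let s := (- p + Sr) / N in
  let Q := (E - 0) * (s - e) / ((E - s) * (0 - e)) in
  1 < Q /\ (Q + 1) / (Q - 1) = (S1 ^ 2 - p * Sr) / (S1 * (Sr - p)).
Proof.
  intros HN H1 H2 H3 e E s Q.
  assert (EQ : Q = (S1 - p) * (Sr + S1) / ((S1 - Sr) * (S1 + p))).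
  { unfold Q, e, E, s. field. repeat split; lra. }
  assert (EQ1 : Q - 1 = 2 * S1 * (Sr - p) / ((S1 - Sr) * (S1 + p))).
  { rewrite EQ. field. lra. }
  split.
  - enough (0 < Q - 1) by lra. rewrite EQ1.
    apply Rdiv_lt_0_compat; apply Rmult_lt_0_compat; lra.
  - rewrite EQ. field. repeat split; nra.
Qed.

Lemma vadd_vscal0 x xi : vadd x (vscal 0 xi) = x.
Proof. destruct x, xi. unfold vadd, vscal; cbn. f_equal; ring. Qed.

Lemma coth_dK_alphaK x xi : nrm2 x < rK ^ 2 -> 0 < nrm2 xi ->
  coth (dK x (frak_a x xi)) * alphaK x xi = alphaF x xi + betaF x xi.
Proof.
  intros Hm HN. pose proof rK_bounds as Hr. pose proof (nrm2_nonneg x) as Hm0.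
  assert (Hr2 : rK ^ 2 < 1) by nra.
  set (p := dot x xi) in *. set (m := nrm2 x) in *. set (N := nrm2 xi) in *.
  set (Sr := sqrt (chord_disc rK x xi)). set (S1 := sqrt (chord_disc 1 x xi)).
  assert (HSr : Sr ^ 2 = p ^ 2 + N * (rK ^ 2 - m)).
  { apply pow2_sqrt. unfold chord_disc. pose proof (pow2_ge_0 p). nra. }
  assert (HS1 : S1 ^ 2 = p ^ 2 + N * (1 - m)).
  { unfold S1. rewrite pow2_sqrt; unfold chord_disc; fold p m N; [ring|].
    pose proof (pow2_ge_0 p). nra. }
  assert (Sr0 : 0 <= Sr) by apply sqrt_pos.
  assert (S10 : 0 <= S1) by apply sqrt_pos.
  assert (Hp : p < Sr /\ - p < Sr) by (split; nra).
  assert (HS : Sr < S1) by nra.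
  destruct (chord_cross_ratio p N S1 Sr) as [HQ Hcoth]; try tauto.
  replace (dK x (frak_a x xi))
    with (dK (vadd x (vscal 0 xi)) (vadd x (vscal ((- p + Sr) / N) xi)))
    by now rewrite vadd_vscal0.
  rewrite dK_line; unfold chord_exit, chord_entry; fold p N S1.
  - rewrite coth_half_ln, Hcoth by exact HQ.
    unfold alphaK, alphaF, betaF. fold p m N.
    replace ((1 - m) * N + p ^ 2) with (S1 ^ 2) by lra.
    replace ((rK ^ 2 - m) * N + p ^ 2) with (Sr ^ 2) by lra.
    rewrite !sqrt_pow2 by lra.
    assert (Em : m = rK ^ 2 - (Sr ^ 2 - p ^ 2) / N) by (rewrite HSr; field; lra).
    assert (Er : rK ^ 2 = 1 - (S1 ^ 2 - Sr ^ 2) / N) by (rewrite HSr, HS1; field; lra).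
    rewrite Em, Er. field. repeat split; nra.
  - exact HN.
  - apply Rlt_div_l; lra.
  - apply Rdiv_lt_0_compat; lra.
  - apply Rmult_lt_compat_r; [apply Rinv_0_lt_compat|]; lra.
Qed.

Lemma FF_eq x xi : DK1 x -> FF x xi = alphaF x xi + betaF x xi.
Proof.
  intros Hx. pose proof (DK1_nrm2 x Hx) as Hm. unfold FF.
  destruct (Req_EM_T (fst xi) 0) as [Hu|Hu], (Req_EM_T (snd xi) 0) as [Hv|Hv];
    try (apply coth_dK_alphaK; [exact Hm | apply nrm2_pos; intros E; rewrite E in *; cbn in *; tauto]).
  destruct xi as [u v]. cbn in Hu, Hv. subst.
  unfold alphaF, betaF, nrm2, dot; cbn [fst snd].
  match goal with |- _ = sqrt ?e / _ + _ => replace e with 0 by ring end.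
  rewrite sqrt_0. unfold Rdiv. ring.
Qed.

(* Rational functions in [(x, y)] whose denominators are powers of
   [c - (x^2 + y^2)]; [RInvRad c] stands for [1 / (c - |x|^2)]. *)
Inductive rexpr : Type :=
| RConst (c : R) | RX | RY
| RAdd (e1 e2 : rexpr) | RMul (e1 e2 : rexpr)
| RInvRad (c : R).

Fixpoint reval (e : rexpr) (x : R2) : R :=
  match e with
  | RConst c => c
  | RX => fst x
  | RY => snd x
  | RAdd e1 e2 => reval e1 x + reval e2 x
  | RMul e1 e2 => reval e1 x * reval e2 x
  | RInvRad c => / (c - nrm2 x)
  end.

Fixpoint rdx (e : rexpr) : rexpr :=
  match e with
  | RConst _ | RY => RConst 0
  | RX => RConst 1
  | RAdd e1 e2 => RAdd (rdx e1) (rdx e2)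
  | RMul e1 e2 => RAdd (RMul (rdx e1) e2) (RMul e1 (rdx e2))
  | RInvRad c => RMul (RMul (RConst 2) RX) (RMul (RInvRad c) (RInvRad c))
  end.

Fixpoint rdy (e : rexpr) : rexpr :=
  match e with
  | RConst _ | RX => RConst 0
  | RY => RConst 1
  | RAdd e1 e2 => RAdd (rdy e1) (rdy e2)
  | RMul e1 e2 => RAdd (RMul (rdy e1) e2) (RMul e1 (rdy e2))
  | RInvRad c => RMul (RMul (RConst 2) RY) (RMul (RInvRad c) (RInvRad c))
  end.

Fixpoint avoids_poles (e : rexpr) (x : R2) : Prop :=
  match e with
  | RConst _ | RX | RY => True
  | RAdd e1 e2 | RMul e1 e2 => avoids_poles e1 x /\ avoids_poles e2 x
  | RInvRad c => c - nrm2 x <> 0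
  end.

Lemma avoids_poles_rdx e x : avoids_poles e x -> avoids_poles (rdx e) x.
Proof. induction e; cbn; tauto. Qed.

Lemma avoids_poles_rdy e x : avoids_poles e x -> avoids_poles (rdy e) x.
Proof. induction e; cbn; tauto. Qed.

Lemma is_derive_rdx e x : avoids_poles e x ->
  is_derive (fun t => reval e (t, snd x)) (fst x) (reval (rdx e) x).
Proof.
  destruct x as [a b]. induction e; cbn in *; intros Hpole.
  1-3: now auto_derive.
  - apply (is_derive_plus (fun t => reval e1 (t, b)) (fun t => reval e2 (t, b))); tauto.
  - apply (is_derive_mult (fun t => reval e1 (t, b)) (fun t => reval e2 (t, b))); first [tauto | exact Rmult_comm].
  - unfold nrm2, dot in *; cbn in *; auto_derive; [exact Hpole | field; exact Hpole].
Qed.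

Lemma is_derive_rdy e x : avoids_poles e x ->
  is_derive (fun t => reval e (fst x, t)) (snd x) (reval (rdy e) x).
Proof.
  destruct x as [a b]. induction e; cbn in *; intros Hpole.
  1-3: now auto_derive.
  - apply (is_derive_plus (fun t => reval e1 (a, t)) (fun t => reval e2 (a, t))); tauto.
  - apply (is_derive_mult (fun t => reval e1 (a, t)) (fun t => reval e2 (a, t))); first [tauto | exact Rmult_comm].
  - unfold nrm2, dot in *; cbn in *; auto_derive; [exact Hpole | field; exact Hpole].
Qed.

Lemma continuous_nrm2 x : continuous nrm2 x.
Proof.
  unfold nrm2, dot.
  apply (continuous_plus (fun y : R2 => fst y * fst y) (fun y : R2 => snd y * snd y)).
  - apply (continuous_mult (fun y : R2 => fst y) (fun y : R2 => fst y)); apply continuous_fst.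
  - apply (continuous_mult (fun y : R2 => snd y) (fun y : R2 => snd y)); apply continuous_snd.
Qed.

Lemma continuous_inv_rad c x : c - nrm2 x <> 0 -> continuous (fun y => / (c - nrm2 y)) x.
Proof.
  intros Hx.
  apply (continuous_comp (fun y => c - nrm2 y) Rinv).
  - apply (continuous_minus (fun _ => c) nrm2); [apply continuous_const | apply continuous_nrm2].
  - apply (ex_derive_continuous (V := R_NormedModule) Rinv). auto_derive. exact Hx.
Qed.

Lemma continuous_reval e x : avoids_poles e x -> continuous (reval e) x.
Proof.
  induction e; cbn; intros Hpole.
  - apply continuous_const.
  - apply continuous_fst.
  - apply continuous_snd.
  - apply (continuous_plus (reval e1) (reval e2)); tauto.
  - apply (continuous_mult (reval e1) (reval e2)); tauto.
  - exact (continuous_inv_rad c x Hpole).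
Qed.

Lemma smooth_reval (U : R2 -> Prop) e :
  (forall x, U x -> avoids_poles e x) -> smooth U (reval e).
Proof.
  intros HU n. revert e HU. induction n as [|n IH]; intros e HU; cbn.
  - intros x Hx. apply continuous_reval, HU, Hx.
  - exists (reval (rdx e)), (reval (rdy e)). split; [|split].
    + intros x Hx. split; [apply is_derive_rdx | apply is_derive_rdy]; apply HU, Hx.
    + apply IH. intros x Hx. apply avoids_poles_rdx, HU, Hx.
    + apply IH. intros x Hx. apply avoids_poles_rdy, HU, Hx.
Qed.

Definition alphaF_g11 : rexpr :=
  RMul (RAdd (RConst (rK ^ 2)) (RMul (RConst (-1)) (RMul RY RY)))
       (RMul (RInvRad (rK ^ 2)) (RInvRad (rK ^ 2))).
Definition alphaF_g12 : rexpr :=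
  RMul (RMul RX RY) (RMul (RInvRad (rK ^ 2)) (RInvRad (rK ^ 2))).
Definition alphaF_g22 : rexpr :=
  RMul (RAdd (RConst (rK ^ 2)) (RMul (RConst (-1)) (RMul RX RX)))
       (RMul (RInvRad (rK ^ 2)) (RInvRad (rK ^ 2))).
Definition betaF_b1 : rexpr :=
  RMul (RMul (RConst (1 - rK ^ 2)) RX) (RMul (RInvRad (rK ^ 2)) (RInvRad 1)).
Definition betaF_b2 : rexpr :=
  RMul (RMul (RConst (1 - rK ^ 2)) RY) (RMul (RInvRad (rK ^ 2)) (RInvRad 1)).

Lemma DK1_denominators x : DK1 x -> 0 < rK ^ 2 - nrm2 x /\ 0 < 1 - nrm2 x.
Proof.
  intros Hx. pose proof (DK1_nrm2 x Hx). pose proof rK_bounds.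
  assert (rK ^ 2 < 1) by nra. lra.
Qed.

Lemma smooth_DK1_coeffs e :
  e = alphaF_g11 \/ e = alphaF_g12 \/ e = alphaF_g22 \/ e = betaF_b1 \/ e = betaF_b2 ->
  smooth DK1 (reval e).
Proof.
  intros He. apply smooth_reval. intros x Hx.
  destruct (DK1_denominators x Hx).
  destruct He as [-> | [-> | [-> | [-> | ->]]]]; cbn; repeat split; lra.
Qed.

Lemma qform_alphaF x xi : rK ^ 2 - nrm2 x <> 0 ->
  qform (reval alphaF_g11 x) (reval alphaF_g12 x) (reval alphaF_g22 x) xi
  = (/ (rK ^ 2 - nrm2 x)) ^ 2 * ((rK ^ 2 - nrm2 x) * nrm2 xi + dot x xi ^ 2).
Proof.
  intros HD. destruct x, xi. cbn -[pow]. unfold qform, nrm2, dot; cbn [fst snd]. field. exact HD.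
Qed.

Lemma riemann_coeffs_alphaF :
  riemann_coeffs DK1 alphaF (reval alphaF_g11) (reval alphaF_g12) (reval alphaF_g22).
Proof.
  split; [|split]; [..| repeat split; apply smooth_DK1_coeffs; tauto].
  - intros x xi Hx. destruct (DK1_denominators x Hx) as [HD _].
    rewrite qform_alphaF, sqrt_sqr_mult, Rabs_pos_eq by (try apply Rlt_le, Rinv_0_lt_compat; lra).
    unfold alphaF. field. lra.
  - intros x xi Hx Hxi. destruct (DK1_denominators x Hx) as [HD _].
    rewrite qform_alphaF by lra.
    apply Rmult_lt_0_compat; [apply pow_lt, Rinv_0_lt_compat; lra|].
    pose proof (nrm2_pos xi Hxi). pose proof (pow2_ge_0 (dot x xi)). nra.
Qed.

Lemma oneform_coeffs_betaF : oneform_coeffs DK1 betaF (reval betaF_b1) (reval betaF_b2).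
Proof.
  split; [|split; apply smooth_DK1_coeffs; tauto].
  intros x xi Hx. destruct (DK1_denominators x Hx).
  destruct x, xi. cbn -[pow] in *. unfold betaF, nrm2, dot in *; cbn [fst snd] in *. field. lra.
Qed.

Lemma differential_fF : is_differential_of DK1 betaF fF.
Proof.
  exists (reval betaF_b1), (reval betaF_b2). split; [exact oneform_coeffs_betaF|].
  intros [a b] Hx. destruct (DK1_denominators _ Hx) as [HD HE].
  cbn -[pow] in *. unfold fF, nrm2, dot in *; cbn [fst snd] in *.
  set (w := rK ^ 2) in *. clearbody w.
  assert (Hq : 0 < (1 + - (a * a + b * b)) * / (w + - (a * a + b * b)))
    by (apply Rdiv_lt_0_compat; lra).
  split; auto_derive; try (repeat split; lra); field; lra.
Qed.

Lemma closed_betaF : is_closed_form DK1 betaF.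
Proof.
  exists (reval betaF_b1), (reval betaF_b2). split; [exact oneform_coeffs_betaF|].
  intros x Hx. destruct (DK1_denominators x Hx).
  assert (Hpoles : forall e, e = betaF_b1 \/ e = betaF_b2 -> avoids_poles e x).
  { intros e [-> | ->]; cbn; repeat split; lra. }
  exists (reval (rdx betaF_b2) x). split.
  - apply is_derive_rdx, Hpoles. tauto.
  - replace (reval (rdx betaF_b2) x) with (reval (rdy betaF_b1) x) by (cbn; ring).
    apply is_derive_rdy, Hpoles. tauto.
Qed.

Lemma dual_norm_sq_betaF x : DK1 x ->
  dual_norm_sq (reval alphaF_g11 x) (reval alphaF_g12 x) (reval alphaF_g22 x)
               (reval betaF_b1 x) (reval betaF_b2 x)
  = nrm2 x * (1 - rK ^ 2) ^ 2 / (rK ^ 2 * (1 - nrm2 x) ^ 2).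
Proof.
  intros Hx. destruct (DK1_denominators x Hx). pose proof rK_bounds.
  destruct x. cbn -[pow] in *. unfold dual_norm_sq, nrm2, dot in *; cbn [fst snd] in *.
  field. repeat split; nra.
Qed.

Lemma dual_norm_bound m w : 0 <= m < w -> w < 1 ->
  m * (1 - w) ^ 2 / (w * (1 - m) ^ 2) < 1.
Proof.
  intros Hm Hw. apply (Rdiv_lt_1 (m * (1 - w) ^ 2)).
  { apply Rmult_lt_0_compat; [lra | apply pow_lt; lra]. }
  enough (0 < w * (1 - m) ^ 2 - m * (1 - w) ^ 2) by lra.
  replace (w * (1 - m) ^ 2 - m * (1 - w) ^ 2) with ((w - m) * (1 - m * w)) by ring.
  apply Rmult_lt_0_compat; nra.
Qed.

Lemma dual_norm_sq_betaF_lt_1 x : DK1 x ->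
  nrm2 x * (1 - rK ^ 2) ^ 2 / (rK ^ 2 * (1 - nrm2 x) ^ 2) < 1.
Proof.
  intros Hx. pose proof rK_bounds. apply dual_norm_bound.
  - split; [apply nrm2_nonneg | apply DK1_nrm2, Hx].
  - nra.
Qed.

Theorem theorem3p1 :
  (forall x xi, DK1 x -> FF x xi = alphaF x xi + betaF x xi) /\
  is_Riemannian_metric DK1 alphaF /\
  is_differential_of DK1 betaF fF /\
  is_closed_form DK1 betaF /\
  (exists g11 g12 g22 b1 b2,
     riemann_coeffs DK1 alphaF g11 g12 g22 /\
     oneform_coeffs DK1 betaF b1 b2 /\
     forall x, DK1 x ->
       dual_norm_sq (g11 x) (g12 x) (g22 x) (b1 x) (b2 x)
         = nrm2 x * (1 - rK ^ 2) ^ 2 / (rK ^ 2 * (1 - nrm2 x) ^ 2) /\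
       nrm2 x * (1 - rK ^ 2) ^ 2 / (rK ^ 2 * (1 - nrm2 x) ^ 2) < 1) /\
  is_Randers DK1 FF.
Proof.
  pose proof riemann_coeffs_alphaF as Halpha.
  pose proof oneform_coeffs_betaF as Hbeta.
  split; [exact FF_eq|].
  split; [eexists _, _, _; exact Halpha|].
  split; [exact differential_fF|].
  split; [exact closed_betaF|].
  split.
  - eexists _, _, _, _, _. split; [exact Halpha|]. split; [exact Hbeta|].
    intros x Hx. split; [apply dual_norm_sq_betaF | apply dual_norm_sq_betaF_lt_1]; exact Hx.
  - exists alphaF, betaF. eexists _, _, _, _, _.
    split; [exact Halpha|]. split; [exact Hbeta|]. split; [exact FF_eq|].
    intros x Hx. rewrite dual_norm_sq_betaF by exact Hx. apply dual_norm_sq_betaF_lt_1, Hx.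
Qed.
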